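(* The polynomials $P_1=(xyz-z+y+x)^2$, $P_2=(yz-xz+xy+1)^2$, $P_3=(yz-xz-xy-1)^2$, $P_4=(xz+yz+xy-1)^2$ are extremal polynomials in the classes $Q_P(2,2,2)$ and $\sigma_P(2,2,2)$.
   Context: $\sigma_P(2,2,2)$ is the set of real polynomials $f(x,y,z)=\sum_{0\le k,\ell,m\le2}a_{k,\ell,m}x^ky^\ell z^m$ that are nonnegative on $\mathbb R^3$; $Q_P(2,2,2)$ is the set of $f\in\sigma_P(2,2,2)$ that can be written as $\sum_{j=1}^r|F_j(x,y,z)|^2$ with polynomials $F_j$. An element $f$ of a convex cone $U$ is extremal in $U$ if whenever $f=g+h$ with $g,h\in U$, both $g$ and $h$ are nonnegative multiples of $f$. *)

(* real polynomials in x,y,z are represented by their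
   polynomial functions R -> R -> R -> R (polynomial functions over the
   infinite field R determine the polynomial uniquely). *)
From Stdlib Require Import Reals.
Open Scope R_scope.

Definition poly_eval (n : nat) (a : nat -> nat -> nat -> R) (x y z : R) : R :=
  sum_f_R0 (fun k => sum_f_R0 (fun l => sum_f_R0 (fun m =>
     a k l m * x ^ k * y ^ l * z ^ m) n) n) n.

Definition is_poly3 (f : R -> R -> R -> R) : Prop :=
  exists (n : nat) (a : nat -> nat -> nat -> R),
    forall x y z, f x y z = poly_eval n a x y z.

Definition is_P222 (f : R -> R -> R -> R) : Prop :=
  exists a : nat -> nat -> nat -> R, forall x y z, f x y z = poly_eval 2 a x y z.

Definition sigmaP222 (f : R -> R -> R -> R) : Prop :=
  is_P222 f /\ forall x y z, 0 <= f x y z.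

Definition QP222 (f : R -> R -> R -> R) : Prop :=
  sigmaP222 f /\
  exists (r : nat) (F : nat -> R -> R -> R -> R),
    (forall j, (j < r)%nat -> is_poly3 (F j)) /\
    forall x y z, f x y z = sum_f_R0 (fun j => if Nat.ltb j r then (F j x y z) ^ 2 else 0) r.

Definition extremal (U : (R -> R -> R -> R) -> Prop) (f : R -> R -> R -> R) : Prop :=
  U f /\
  forall g h, U g -> U h -> (forall x y z, f x y z = g x y z + h x y z) ->
    (exists c, 0 <= c /\ forall x y z, g x y z = c * f x y z) /\
    (exists c, 0 <= c /\ forall x y z, h x y z = c * f x y z).

Definition P1 (x y z : R) : R := (x*y*z - z + y + x) ^ 2.
Definition P2 (x y z : R) : R := (y*z - x*z + x*y + 1) ^ 2.
Definition P3 (x y z : R) : R := (y*z - x*z - x*y - 1) ^ 2.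
Definition P4 (x y z : R) : R := (x*z + y*z + x*y - 1) ^ 2.

(* Each P_i is the square of a polynomial p of degree at most 1 in each variable.
   If 0 <= g <= p^2 and g has degree at most 2 in each variable, then on every
   axis-parallel line g is a nonnegative quadratic below the square of an affine
   function, hence a constant multiple of that square: it has a double root where
   the affine function vanishes, and is constant where the affine function is.
   Starting at a point where p <> 0, the ratio g / p^2 propagates along x-lines,
   then y-lines, then z-lines; each restriction of p to a line vanishes at most
   once, and a quadratic known off one point is known everywhere, so g = c p^2 on
   all of R^3.  Both summands of a decomposition p^2 = g + h in sigma_P(2,2,2)
   are such g. *)

From Stdlib Require Import Reals Lra Psatz.
Open Scope R_scope.

Definition quadratic (f : R -> R) : Prop :=
  exists a b c, forall t, f t = a * t ^ 2 + b * t + c.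

Definition affine (f : R -> R) : Prop :=
  exists a b, forall t, f t = a * t + b.

Lemma quadratic_nonneg_coef a b c :
  (forall t, 0 <= a * t ^ 2 + b * t + c) -> 0 <= a /\ b ^ 2 <= 4 * a * c.
Proof.
  intros Hnn.
  destruct (Rtotal_order a 0) as [Ha | [-> | Ha]].
  - (* for t >= 1 with a t + b <= -(|c| + 1) the value is at most c - (|c| + 1) *)
    exfalso.
    set (t := (Rabs b + Rabs c + 1) / (- a) + 1).
    assert (Ht : a * t = - (Rabs b + Rabs c + 1) + a) by (unfold t; field; lra).
    assert (b <= Rabs b) by apply RRle_abs.
    assert (c <= Rabs c) by apply RRle_abs.
    assert (0 <= Rabs c) by apply Rabs_pos.
    assert (1 <= t).
    { unfold t. pose proof (Rabs_pos b).
      assert (0 < (Rabs b + Rabs c + 1) / - a) by (apply Rdiv_lt_0_compat; lra).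
      lra. }
    specialize (Hnn t). nra.
  - destruct (Req_dec b 0) as [-> | Hb]; [lra | exfalso].
    specialize (Hnn (- (c + 1) / b)).
    replace (0 * (- (c + 1) / b) ^ 2 + b * (- (c + 1) / b) + c) with (-1) in Hnn
      by (field; exact Hb).
    lra.
  - (* the minimum of the quadratic is attained at -b/(2a) *)
    specialize (Hnn (- b / (2 * a))).
    replace (a * (- b / (2 * a)) ^ 2 + b * (- b / (2 * a)) + c)
      with ((4 * a * c - b ^ 2) / (4 * a)) in Hnn by (field; lra).
    split; [lra|].
    assert (0 <= (4 * a * c - b ^ 2) / (4 * a) * (4 * a)) by (apply Rmult_le_pos; lra).
    replace ((4 * a * c - b ^ 2) / (4 * a) * (4 * a)) with (4 * a * c - b ^ 2) in *
      by (field; lra).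
    lra.
Qed.

Lemma quadratic_below_affine_sq (g l : R -> R) :
  quadratic g -> affine l -> (forall t, 0 <= g t <= l t ^ 2) ->
  exists k, forall t, g t = k * l t ^ 2.
Proof.
  intros [a [b [c Hg]]] [al [be Hl]] Hb.
  destruct (Req_dec al 0) as [-> | Hal].
  - (* both g and be^2 - g are nonnegative quadratics, so g is constant *)
    assert (Hlo := quadratic_nonneg_coef a b c).
    assert (Hhi := quadratic_nonneg_coef (- a) (- b) (be ^ 2 - c)).
    destruct Hlo as [Ha Hbc]; [intros t; rewrite <- Hg; apply Hb|].
    destruct Hhi as [Ha' _].
    { intros t. specialize (Hb t). rewrite Hg, Hl in Hb. lra. }
    assert (a = 0) by lra. subst a.
    assert (b = 0) by nra. subst b.
    destruct (Req_dec be 0) as [-> | Hbe].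
    + exists 0. intros t. specialize (Hb t). rewrite Hl in Hb. simpl in Hb. lra.
    + exists (c / be ^ 2). intros t. rewrite Hg, Hl. field. exact Hbe.
  - (* g vanishes at the root t0 of l, and being nonnegative it has a double root there *)
    set (t0 := - be / al).
    assert (Hl0 : l t0 = 0) by (rewrite Hl; unfold t0; field; exact Hal).
    assert (Hg0 : g t0 = 0) by (specialize (Hb t0); rewrite Hl0 in Hb; simpl in Hb; lra).
    assert (Hshift : forall s, g (t0 + s) = a * s ^ 2 + (2 * a * t0 + b) * s + 0).
    { intros s. rewrite Hg. rewrite Hg in Hg0. nra. }
    destruct (quadratic_nonneg_coef a (2 * a * t0 + b) 0) as [_ Hd].
    { intros s. rewrite <- Hshift. apply Hb. }
    assert (Hb' : 2 * a * t0 + b = 0) by nra.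
    exists (a / al ^ 2). intros t.
    replace t with (t0 + (t - t0)) at 1 by ring.
    rewrite Hshift, Hb', Hl. unfold t0. field. exact Hal.
Qed.

Lemma quadratic_below_affine_sq_eq (g l : R -> R) c u :
  quadratic g -> affine l -> (forall t, 0 <= g t <= l t ^ 2) ->
  l u <> 0 -> g u = c * l u ^ 2 -> forall t, g t = c * l t ^ 2.
Proof.
  intros Hg Hl Hb Hu Eu.
  destruct (quadratic_below_affine_sq g l Hg Hl Hb) as [k Hk].
  assert (k = c).
  { apply (Rmult_eq_reg_r (l u ^ 2)); [|apply pow_nonzero; exact Hu].
    rewrite <- Hk. exact Eu. }
  subst k. exact Hk.
Qed.

Lemma affine_nonzero_off_root (l : R -> R) u :
  affine l -> l u <> 0 -> exists t0, forall t, t <> t0 -> l t <> 0.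
Proof.
  intros [a [b Hl]] Hu.
  destruct (Req_dec a 0) as [-> | Ha].
  - exists u. intros t _. rewrite Hl. rewrite Hl in Hu. lra.
  - exists (- b / a). intros t Ht E. apply Ht.
    rewrite Hl in E. apply (Rmult_eq_reg_l a); [|exact Ha].
    replace (a * (- b / a)) with (- b) by (field; exact Ha). lra.
Qed.

Lemma quadratic_scaled_affine_sq (l : R -> R) c :
  affine l -> quadratic (fun t => c * l t ^ 2).
Proof.
  intros [a [b Hl]]. exists (c * a ^ 2), (2 * c * a * b), (c * b ^ 2).
  intros t. rewrite Hl. ring.
Qed.

Lemma quadratic_eq_off_point (f h : R -> R) t0 :
  quadratic f -> quadratic h -> (forall t, t <> t0 -> f t = h t) ->
  forall t, f t = h t.
Proof.
  intros [a [b [c Hf]]] [a' [b' [c' Hh]]] E.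
  assert (E1 := E (t0 + 1) ltac:(lra)).
  assert (E2 := E (t0 + 2) ltac:(lra)).
  assert (E3 := E (t0 + 3) ltac:(lra)).
  rewrite Hf, Hh in E1, E2, E3.
  assert (a = a') by nra. subst a'.
  assert (b = b') by nra. subst b'.
  assert (c = c') by nra. subst c'.
  intros t. rewrite Hf, Hh. reflexivity.
Qed.

Section PlaneRigidity.

Variables G Q : R -> R -> R.
Hypothesis G_quadratic_t : forall s, quadratic (fun t => G t s).
Hypothesis G_quadratic_s : forall t, quadratic (fun s => G t s).
Hypothesis Q_affine_t : forall s, affine (fun t => Q t s).
Hypothesis Q_affine_s : forall t, affine (fun s => Q t s).
Hypothesis G_below : forall t s, 0 <= G t s <= Q t s ^ 2.

Lemma eq_scaled_sq_from_line c t1 s0 :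
  Q t1 s0 <> 0 -> (forall t, G t s0 = c * Q t s0 ^ 2) ->
  forall t s, G t s = c * Q t s ^ 2.
Proof.
  intros Hne Hline.
  destruct (affine_nonzero_off_root (fun t => Q t s0) t1 (Q_affine_t s0) Hne)
    as [t0 Ht0].
  assert (Hcols : forall t, t <> t0 -> forall s, G t s = c * Q t s ^ 2).
  { intros t Ht.
    apply (quadratic_below_affine_sq_eq (fun s => G t s) (fun s => Q t s) c s0);
      auto. }
  intros t s.
  apply (quadratic_eq_off_point (fun t => G t s) (fun t => c * Q t s ^ 2) t0);
    auto using quadratic_scaled_affine_sq.
Qed.

End PlaneRigidity.

Section SpaceRigidity.

Variables g p : R -> R -> R -> R.
Hypothesis g_quadratic_x : forall y z, quadratic (fun t => g t y z).
Hypothesis g_quadratic_y : forall x z, quadratic (fun t => g x t z).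
Hypothesis g_quadratic_z : forall x y, quadratic (fun t => g x y t).
Hypothesis p_affine_x : forall y z, affine (fun t => p t y z).
Hypothesis p_affine_y : forall x z, affine (fun t => p x t z).
Hypothesis p_affine_z : forall x y, affine (fun t => p x y t).
Hypothesis g_below : forall x y z, 0 <= g x y z <= p x y z ^ 2.

Lemma eq_scaled_sq_from_point c x0 y0 z0 :
  p x0 y0 z0 <> 0 -> g x0 y0 z0 = c * p x0 y0 z0 ^ 2 ->
  forall x y z, g x y z = c * p x y z ^ 2.
Proof.
  intros Hne E0.
  assert (Hline : forall t, g t y0 z0 = c * p t y0 z0 ^ 2).
  { apply (quadratic_below_affine_sq_eq (fun t => g t y0 z0) (fun t => p t y0 z0) c x0);
      auto. }
  assert (Hplane : forall t s, g t s z0 = c * p t s z0 ^ 2).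
  { apply (eq_scaled_sq_from_line (fun t s => g t s z0) (fun t s => p t s z0))
      with (t1 := x0) (s0 := y0); auto. }
  destruct (affine_nonzero_off_root (fun s => p x0 s z0) y0 (p_affine_y x0 z0) Hne)
    as [y1 Hy1].
  assert (Hslices : forall s, s <> y1 -> forall t r, g t s r = c * p t s r ^ 2).
  { intros s Hs.
    apply (eq_scaled_sq_from_line (fun t r => g t s r) (fun t r => p t s r))
      with (t1 := x0) (s0 := z0); auto. }
  intros x y z.
  apply (quadratic_eq_off_point (fun s => g x s z) (fun s => c * p x s z ^ 2) y1);
    auto using quadratic_scaled_affine_sq.
Qed.

End SpaceRigidity.

Definition multiaffine (p : R -> R -> R -> R) : Prop :=
  exists a : nat -> nat -> nat -> R, forall x y z, p x y z = poly_eval 1 a x y z.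

Lemma multiaffine_of_coefs (p : R -> R -> R -> R) a0 ax ay az axy axz ayz axyz :
  (forall x y z, p x y z = a0 + ax * x + ay * y + az * z
                           + axy * x * y + axz * x * z + ayz * y * z + axyz * x * y * z) ->
  multiaffine p.
Proof.
  intros E.
  exists (fun k l m => match k, l, m with
    | O, O, O => a0 | 1%nat, O, O => ax | O, 1%nat, O => ay | O, O, 1%nat => az
    | 1%nat, 1%nat, O => axy | 1%nat, O, 1%nat => axz | O, 1%nat, 1%nat => ayz
    | 1%nat, 1%nat, 1%nat => axyz | _, _, _ => 0 end).
  intros x y z. rewrite E. unfold poly_eval. simpl. ring.
Qed.

Lemma multiaffine_affine p : multiaffine p ->
  (forall y z, affine (fun t => p t y z)) /\
  (forall x z, affine (fun t => p x t z)) /\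
  (forall x y, affine (fun t => p x y t)).
Proof.
  intros [a Ha].
  split; [|split]; intros u v; [exists (p 1 u v - p 0 u v), (p 0 u v)
    | exists (p u 1 v - p u 0 v), (p u 0 v) | exists (p u v 1 - p u v 0), (p u v 0)];
    intros t; rewrite !Ha; unfold poly_eval; simpl; ring.
Qed.

Lemma P222_quadratic f : is_P222 f ->
  (forall y z, quadratic (fun t => f t y z)) /\
  (forall x z, quadratic (fun t => f x t z)) /\
  (forall x y, quadratic (fun t => f x y t)).
Proof.
  intros [a Ha].
  split; [|split]; intros u v;
    [ exists ((f 1 u v + f (-1) u v) / 2 - f 0 u v), ((f 1 u v - f (-1) u v) / 2), (f 0 u v)
    | exists ((f u 1 v + f u (-1) v) / 2 - f u 0 v), ((f u 1 v - f u (-1) v) / 2), (f u 0 v)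
    | exists ((f u v 1 + f u v (-1)) / 2 - f u v 0), ((f u v 1 - f u v (-1)) / 2), (f u v 0) ];
    intros t; rewrite !Ha; unfold poly_eval; simpl; field.
Qed.

(* The guards [i <= k] etc. exclude the truncated differences [k - i]. *)
Definition sq_coef (a : nat -> nat -> nat -> R) (k l m : nat) : R :=
  sum_f_R0 (fun i => sum_f_R0 (fun j => sum_f_R0 (fun h =>
    if ((i <=? k) && (j <=? l) && (h <=? m)
        && (k - i <=? 1) && (l - j <=? 1) && (m - h <=? 1))%nat%bool
    then a i j h * a (k - i)%nat (l - j)%nat (m - h)%nat else 0) 1) 1) 1.

Lemma poly_eval_1_sq a x y z : poly_eval 1 a x y z ^ 2 = poly_eval 2 (sq_coef a) x y z.
Proof. unfold poly_eval, sq_coef. simpl. ring. Qed.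

Lemma QP222_multiaffine_sq p : multiaffine p -> QP222 (fun x y z => p x y z ^ 2).
Proof.
  intros [a Ha]. split; [split|].
  - exists (sq_coef a). intros x y z. rewrite Ha. apply poly_eval_1_sq.
  - intros x y z. apply pow2_ge_0.
  - exists 1%nat, (fun _ => p). split.
    + intros _ _. exists 1%nat, a. exact Ha.
    + intros x y z. simpl. ring.
Qed.

Lemma below_multiaffine_sq_proportional p x0 y0 z0 g :
  multiaffine p -> p x0 y0 z0 <> 0 ->
  is_P222 g -> (forall x y z, 0 <= g x y z <= p x y z ^ 2) ->
  exists c, 0 <= c /\ forall x y z, g x y z = c * p x y z ^ 2.
Proof.
  intros Hp Hne Hg Hb.
  destruct (multiaffine_affine p Hp) as [Hpx [Hpy Hpz]].
  destruct (P222_quadratic g Hg) as [Hgx [Hgy Hgz]].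
  assert (Hpos : 0 < p x0 y0 z0 ^ 2) by (rewrite <- Rsqr_pow2; apply Rsqr_pos_lt; exact Hne).
  set (c := g x0 y0 z0 / p x0 y0 z0 ^ 2).
  exists c. split.
  - unfold c. destruct (Hb x0 y0 z0). unfold Rdiv.
    apply Rmult_le_pos; [lra | apply Rlt_le, Rinv_0_lt_compat; exact Hpos].
  - apply (eq_scaled_sq_from_point g p) with (x0 := x0) (y0 := y0) (z0 := z0); auto.
    unfold c. field. lra.
Qed.

Lemma multiaffine_sq_extremal (U : (R -> R -> R -> R) -> Prop) p x0 y0 z0 :
  (forall f, U f -> sigmaP222 f) -> multiaffine p -> p x0 y0 z0 <> 0 ->
  U (fun x y z => p x y z ^ 2) -> extremal U (fun x y z => p x y z ^ 2).
Proof.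
  intros HU Hp Hne HP. split; [exact HP|].
  intros g h Hg Hh E.
  destruct (HU g Hg) as [Hg222 Hg0], (HU h Hh) as [Hh222 Hh0].
  split; apply (below_multiaffine_sq_proportional p x0 y0 z0); auto;
    intros x y z; specialize (E x y z); specialize (Hg0 x y z); specialize (Hh0 x y z);
    lra.
Qed.

Theorem multiaffine_sq_extremal_QP222_sigmaP222 p x0 y0 z0 :
  multiaffine p -> p x0 y0 z0 <> 0 ->
  extremal QP222 (fun x y z => p x y z ^ 2) /\ extremal sigmaP222 (fun x y z => p x y z ^ 2).
Proof.
  intros Hp Hne. pose proof (QP222_multiaffine_sq p Hp) as HQ.
  split; apply (multiaffine_sq_extremal _ p x0 y0 z0); auto.
  - intros f Hf. exact (proj1 Hf).
  - exact (proj1 HQ).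
Qed.

Theorem proposition6 :
  (extremal QP222 P1 /\ extremal sigmaP222 P1) /\
  (extremal QP222 P2 /\ extremal sigmaP222 P2) /\
  (extremal QP222 P3 /\ extremal sigmaP222 P3) /\
  (extremal QP222 P4 /\ extremal sigmaP222 P4).
Proof.
  split; [|split; [|split]].
  - apply (multiaffine_sq_extremal_QP222_sigmaP222
             (fun x y z => x * y * z - z + y + x) 1 0 0); [|lra].
    apply (multiaffine_of_coefs _ 0 1 1 (-1) 0 0 0 1). intros; ring.
  - apply (multiaffine_sq_extremal_QP222_sigmaP222
             (fun x y z => y * z - x * z + x * y + 1) 0 0 0); [|lra].
    apply (multiaffine_of_coefs _ 1 0 0 0 1 (-1) 1 0). intros; ring.
  - apply (multiaffine_sq_extremal_QP222_sigmaP222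
             (fun x y z => y * z - x * z - x * y - 1) 0 0 0); [|lra].
    apply (multiaffine_of_coefs _ (-1) 0 0 0 (-1) (-1) 1 0). intros; ring.
  - apply (multiaffine_sq_extremal_QP222_sigmaP222
             (fun x y z => x * z + y * z + x * y - 1) 0 0 0); [|lra].
    apply (multiaffine_of_coefs _ (-1) 0 0 0 1 1 1 0). intros; ring.
Qed.
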